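(* Let $(x^k,\lambda^k)_{k\ge0}$ be generated by the proximal ADMM applied to (P). Suppose Assumption (A2) holds on a compact set $S$ with constants $M_f,L_f,C_\varphi,M_\varphi,L_\varphi$, and that $x^k,x^{k+1}\in S$ for some $k\ge1$. Then for every $i=0,\dots,n-1$, $$\|\lambda_i^{k+1}-\lambda_i^k\|^2\le\sum_{j=i}^{n-1}2(n-i)C_{j,i}^2\|x_{j+1}^{k+1}-x_{j+1}^k\|^2+\sum_{j=i}^{n-1}2(n-i)\tilde C_{j,i}^2\|x_{j+1}^k-x_{j+1}^{k-1}\|^2,$$ where for $j>i$ $$C_{j,i}=\frac{M_\varphi^{j-i}-M_\varphi^{n-i-1}}{1-M_\varphi}M_fL_\varphi+M_\varphi^{j-i}L_f+(2j-2i+1)\frac{M_\varphi^{j-i}}{\eta_{j+1}}+(2j-2i-1)\rho_jM_\varphi^{j-i},\qquad \tilde C_{j,i}=\frac{M_\varphi^{j-i}}{\eta_{j+1}}+\rho_jM_\varphi^{j-i},$$ and for $j=i$ $$C_{i,i}=\frac{1-M_\varphi^{n-i-1}}{1-M_\varphi}M_fL_\varphi+L_f+\frac{1}{\eta_{i+1}},\qquad \tilde C_{i,i}=\frac{1}{\eta_{i+1}}.$$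
   Context: Let $n,d\ge1$, and let $f_0,\dots,f_n:\mathbb{R}^d\to\mathbb{R}$ and $\varphi:\mathbb{R}^d\to\mathbb{R}^d$ be continuously differentiable; $\nabla\varphi$ denotes the Jacobian matrix and $\|\cdot\|$ the Euclidean norm / induced matrix 2-norm. Problem (P): minimize $\sum_{i=0}^n f_i(x_i)$ over $x=(x_0,\dots,x_n)\in(\mathbb{R}^d)^{n+1}$ subject to $x_{j+1}=\varphi(x_j)$, $j=0,\dots,n-1$. For penalty parameters $\rho_0,\dots,\rho_{n-1}>0$ and $\lambda=(\lambda_0,\dots,\lambda_{n-1})\in(\mathbb{R}^d)^n$, the augmented Lagrangian is $L_\rho(x,\lambda)=\sum_{i=0}^n f_i(x_i)+\sum_{i=0}^{n-1}\big(\langle\lambda_i,x_{i+1}-\varphi(x_i)\rangle+\frac{\rho_i}{2}\|x_{i+1}-\varphi(x_i)\|^2\big)$. Proximal ADMM: given $\eta_0,\dots,\eta_n>0$ and an initial point $(x^0,\lambda^0)$, for $k=0,1,\dots$, for $i=0,1,\dots,n$ in this order, $x_i^{k+1}$ is a (global) minimizer over $x_i$ of $L_\rho(x_0^{k+1},\dots,x_{i-1}^{k+1},x_i,x_{i+1}^k,\dots,x_n^k,\lambda^k)+\frac{1}{2\eta_i}\|x_i-x_i^k\|^2$ (assumed to exist), then $\lambda_j^{k+1}=\lambda_j^k+\rho_j(x_{j+1}^{k+1}-\varphi(x_j^{k+1}))$, $j=0,\dots,n-1$. Assumption (A2) on a compact set $S\subset(\mathbb{R}^d)^{n+1}$: there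 are constants $M_f,L_f,C_\varphi,M_\varphi,L_\varphi>0$ such that for all $x=(x_0,\dots,x_n),y=(y_0,\dots,y_n)\in S$ and all $i=0,\dots,n$: $\|\nabla f_i(x_i)\|\le M_f$, $\|\nabla f_i(x_i)-\nabla f_i(y_i)\|\le L_f\|x_i-y_i\|$, $\|\varphi(x_i)\|\le C_\varphi$, $\|\nabla\varphi(x_i)\|\le M_\varphi$, $\|\nabla\varphi(x_i)-\nabla\varphi(y_i)\|\le L_\varphi\|x_i-y_i\|$. Quotients of the form $\frac{M_\varphi^a-M_\varphi^b}{1-M_\varphi}$ ($a\le b$) denote $\sum_{l=a}^{b-1}M_\varphi^l$ (in particular when $M_\varphi=1$). *)

From HB Require Import structures.
From mathcomp Require Import all_boot all_order all_algebra.
From mathcomp Require Import all_classical all_reals all_analysis.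
Set Implicit Arguments.
Unset Strict Implicit.
Unset Printing Implicit Defensive.
Import Order.TTheory GRing.Theory Num.Theory numFieldNormedType.Exports.
Local Open Scope classical_set_scope.
Local Open Scope ring_scope.

Section ADMM.
Variables (R : realType) (d : nat).

Definition dotp (u v : 'cV[R]_d) : R := \sum_(a < d) u a 0 * v a 0.
Definition enorm (u : 'cV[R]_d) : R := Num.sqrt (dotp u u).

Definition mnorm (A : 'M[R]_d) : R :=
  sup [set enorm (A *m v) | v in [set v : 'cV[R]_d | enorm v <= 1]].

(** A point (x_0,...,x_n) of (R^d)^(n+1), given as a nat-indexed family of
    which only the indices 0..n matter, packed as the d x (n+1) matrix
    whose i-th column is x_i. *)
Definition pack (n : nat) (x : nat -> 'cV[R]_d) : 'M[R]_(d, n.+1) :=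
  \matrix_(a < d, i < n.+1) x i a 0.

Definition auglag (n : nat) (f : nat -> 'cV[R]_d -> R) (phi : 'cV[R]_d -> 'cV[R]_d)
    (rho : nat -> R) (x lam : nat -> 'cV[R]_d) : R :=
  \sum_(i < n.+1) f i (x i)
  + \sum_(i < n) (dotp (lam i) (x i.+1 - phi (x i))
                  + rho i / 2 * enorm (x i.+1 - phi (x i)) ^+ 2).

Definition gs_point (x : nat -> nat -> 'cV[R]_d) (k i : nat) (y : 'cV[R]_d)
    : nat -> 'cV[R]_d :=
  fun j => if (j < i)%N then x k.+1 j else if j == i then y else x k j.

Definition prox_admm (n : nat) (f : nat -> 'cV[R]_d -> R)
    (phi : 'cV[R]_d -> 'cV[R]_d) (rho eta : nat -> R)
    (x lam : nat -> nat -> 'cV[R]_d) : Prop :=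
  forall k : nat,
    (forall i : nat, (i <= n)%N -> forall y : 'cV[R]_d,
        auglag n f phi rho (gs_point x k i (x k.+1 i)) (lam k)
          + 1 / (2 * eta i) * enorm (x k.+1 i - x k i) ^+ 2
        <= auglag n f phi rho (gs_point x k i y) (lam k)
          + 1 / (2 * eta i) * enorm (y - x k i) ^+ 2)
    /\ (forall j : nat, (j < n)%N ->
          lam k.+1 j = lam k j + rho j *: (x k.+1 j.+1 - phi (x k.+1 j))).

(** Assumption (A2) on S (a set of points of (R^d)^(n+1), packed as matrices
    whose i-th column is the i-th block). gradf i is the gradient of f_i and
    Jphi the Jacobian matrix of phi. *)
Definition A2 (n : nat) (S : set 'M[R]_(d, n.+1))
    (gradf : nat -> 'cV[R]_d -> 'cV[R]_d) (phi : 'cV[R]_d -> 'cV[R]_d)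
    (Jphi : 'cV[R]_d -> 'M[R]_d) (Mf Lf Cphi Mphi Lphi : R) : Prop :=
  ([/\ 0 < Mf, 0 < Lf, 0 < Cphi, 0 < Mphi & 0 < Lphi] /\
   forall X Y : 'M[R]_(d, n.+1), S X -> S Y -> forall i : 'I_n.+1,
     [/\ enorm (gradf i (col i X)) <= Mf,
         enorm (gradf i (col i X) - gradf i (col i Y))
           <= Lf * enorm (col i X - col i Y),
         enorm (phi (col i X)) <= Cphi,
         mnorm (Jphi (col i X)) <= Mphi &
         mnorm (Jphi (col i X) - Jphi (col i Y))
           <= Lphi * enorm (col i X - col i Y)]).

(** (M^a - M^b)/(1 - M) for a <= b, read as sum_{l=a}^{b-1} M^l. *)
Definition gsum (M : R) (a b : nat) : R := \sum_(a <= l < b) M ^+ l.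

Definition Cji (n : nat) (Mf Lf Mphi Lphi : R) (rho eta : nat -> R) (j i : nat) : R :=
  if j == i then
    gsum Mphi 0 (n - i - 1) * Mf * Lphi + Lf + 1 / eta i.+1
  else
    gsum Mphi (j - i) (n - i - 1) * Mf * Lphi + Mphi ^+ (j - i) * Lf
    + (2 * (j - i) + 1)%:R * (Mphi ^+ (j - i) / eta j.+1)
    + (2 * (j - i) - 1)%:R * rho j * Mphi ^+ (j - i).

Definition Ctji (Mphi : R) (rho eta : nat -> R) (j i : nat) : R :=
  if j == i then 1 / eta i.+1
  else Mphi ^+ (j - i) / eta j.+1 + rho j * Mphi ^+ (j - i).

End ADMM.

(* The first-order condition of the (j+1)-th proximal subproblem, combined with the
   multiplier update, expresses lambda_j^{k+1} through grad f_{j+1}(x_{j+1}^{k+1}), the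
   proximal step x_{j+1}^{k+1} - x_{j+1}^k, and Jphi(x_{j+1}^{k+1})^T applied to
   lambda_{j+1}^{k+1} - rho_{j+1} (x_{j+2}^{k+1} - x_{j+2}^k).  Taking norms under (A2)
   bounds ||lambda_j^{k+1}|| and ||lambda_j^{k+1} - lambda_j^k|| by the same quantities at
   block j+1; unrolling these two recursions from the last block, where the coupling term
   is absent, produces exactly the constants C_{j,i} and tilde C_{j,i}.  Squaring uses
   (sum_{j=i}^{n-1} a_j)^2 <= (n-i) sum a_j^2 and (p+q)^2 <= 2p^2 + 2q^2. *)

From HB Require Import structures.
From mathcomp Require Import all_boot all_order all_algebra.
From mathcomp Require Import all_classical all_reals all_analysis.
From mathcomp Require Import ring lra zify.
Import Order.TTheory GRing.Theory Num.Theory numFieldNormedType.Exports.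
Local Open Scope classical_set_scope.
Local Open Scope ring_scope.

Section Euclidean.
Context {R : realType} {d : nat}.
Implicit Types (u v w : 'cV[R]_d) (A B : 'M[R]_d).

Lemma dotpE u v : dotp u v = (u^T *m v) 0 0.
Proof. by rewrite /dotp !mxE; apply: eq_bigr => a _; rewrite mxE. Qed.

Lemma dotpC u v : dotp u v = dotp v u.
Proof. by rewrite /dotp; apply: eq_bigr => a _; rewrite mulrC. Qed.

Lemma dotpDr u v w : dotp u (v + w) = dotp u v + dotp u w.
Proof. by rewrite !dotpE mulmxDr mxE. Qed.

Lemma dotpDl u v w : dotp (v + w) u = dotp v u + dotp w u.
Proof. by rewrite dotpC dotpDr !(dotpC u). Qed.

Lemma dotpZr c u v : dotp u (c *: v) = c * dotp u v.
Proof. by rewrite !dotpE -scalemxAr mxE. Qed.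

Lemma dotpZl c u v : dotp (c *: v) u = c * dotp v u.
Proof. by rewrite dotpC dotpZr dotpC. Qed.

Lemma dotpNr u v : dotp u (- v) = - dotp u v.
Proof. by rewrite -scaleN1r dotpZr mulN1r. Qed.

Lemma dotpNl u v : dotp (- v) u = - dotp v u.
Proof. by rewrite dotpC dotpNr dotpC. Qed.

Lemma dotpBr u v w : dotp u (v - w) = dotp u v - dotp u w.
Proof. by rewrite dotpDr dotpNr. Qed.

Lemma dotpBl u v w : dotp (v - w) u = dotp v u - dotp w u.
Proof. by rewrite dotpDl dotpNl. Qed.

Lemma dotp0r u : dotp u 0 = 0.
Proof. by rewrite /dotp big1 // => a _; rewrite mxE mulr0. Qed.

Lemma dotp0l u : dotp 0 u = 0.
Proof. by rewrite dotpC dotp0r. Qed.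

Lemma dotp_ge0 u : 0 <= dotp u u.
Proof. by apply: sumr_ge0 => a _; rewrite -expr2 sqr_ge0. Qed.

Lemma dotp_eq0 u : dotp u u = 0 -> u = 0.
Proof.
move=> /eqP; rewrite psumr_eq0 => [/allP u0|a _]; last by rewrite -expr2 sqr_ge0.
apply/matrixP => a b; rewrite (ord1 b) mxE.
by have /u0 := mem_index_enum a; rewrite -expr2 sqrf_eq0 => /eqP.
Qed.

Lemma dotp_trmx A u v : dotp (A^T *m u) v = dotp u (A *m v).
Proof. by rewrite !dotpE trmx_mul trmxK mulmxA. Qed.

Lemma enorm_ge0 u : 0 <= enorm u.
Proof. exact: sqrtr_ge0. Qed.

Lemma enorm_sq u : enorm u ^+ 2 = dotp u u.
Proof. by rewrite /enorm sqr_sqrtr // dotp_ge0. Qed.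

Lemma enorm0 : enorm (0 : 'cV[R]_d) = 0.
Proof. by rewrite /enorm dotp0r sqrtr0. Qed.

Lemma enorm_eq0 u : enorm u = 0 -> u = 0.
Proof. by move=> h; apply: dotp_eq0; rewrite -enorm_sq h expr0n. Qed.

Lemma enormZ c u : enorm (c *: u) = `|c| * enorm u.
Proof.
rewrite /enorm dotpZl dotpZr mulrA -expr2 sqrtrM ?sqr_ge0 //.
by rewrite sqrtr_sqr.
Qed.

Lemma enormN u : enorm (- u) = enorm u.
Proof. by rewrite -scaleN1r enormZ normrN normr1 mul1r. Qed.

Lemma dotp_young u v s : 0 < s -> 2 * dotp u v <= s * dotp u u + s^-1 * dotp v v.
Proof.
move=> s0; have := dotp_ge0 (s *: u - v).
rewrite !dotpBl !dotpBr !dotpZl !dotpZr (dotpC v u) => h.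
rewrite -subr_ge0; have -> : s * dotp u u + s^-1 * dotp v v - 2 * dotp u v
   = s^-1 * (s * (s * dotp u u) - s * dotp u v - (s * dotp u v - dotp v v)).
  by field; rewrite gt_eqF.
by rewrite mulr_ge0 // invr_ge0 ltW.
Qed.

Lemma cauchy_schwarz u v : dotp u v <= enorm u * enorm v.
Proof.
have [u0|nu] := eqVneq (enorm u) 0.
  by rewrite (enorm_eq0 _ u0) dotp0l enorm0 mul0r.
have [v0|nv] := eqVneq (enorm v) 0.
  by rewrite (enorm_eq0 _ v0) dotp0r enorm0 mulr0.
have gu : 0 < enorm u by rewrite lt_def nu enorm_ge0.
have gv : 0 < enorm v by rewrite lt_def nv enorm_ge0.
have := dotp_young u v _ (divr_gt0 gv gu).
rewrite -!enorm_sq invf_div.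
have -> : enorm v / enorm u * enorm u ^+ 2 + enorm u / enorm v * enorm v ^+ 2
   = 2 * (enorm u * enorm v) by field; apply/andP; split; rewrite gt_eqF.
by rewrite ler_pM2l.
Qed.

Lemma cauchy_schwarz_abs u v : `|dotp u v| <= enorm u * enorm v.
Proof.
rewrite ler_norml cauchy_schwarz andbT lerNl -dotpNl.
by rewrite (le_trans (cauchy_schwarz _ _)) // enormN.
Qed.

Lemma enormD u v : enorm (u + v) <= enorm u + enorm v.
Proof.
rewrite -(ler_pXn2r (n:=2)) // ?nnegrE ?addr_ge0 ?enorm_ge0 //.
rewrite enorm_sq dotpDl !dotpDr (dotpC v u) sqrrD -!enorm_sq.
by have := cauchy_schwarz u v; lra.
Qed.

Lemma enormB_le u v : enorm (u - v) <= enorm u + enorm v.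
Proof. by rewrite (le_trans (enormD _ _)) // enormN. Qed.

Lemma mulmx_enorm_bounded A :
  exists K, forall w, enorm w <= 1 -> enorm (A *m w) <= K.
Proof.
exists (Num.sqrt (\sum_(a < d) dotp (row a A)^T (row a A)^T)) => w w1.
rewrite /enorm ler_sqrt; last by apply: sumr_ge0 => a _; apply: dotp_ge0.
apply: ler_sum => a _.
have -> : (A *m w) a 0 = dotp (row a A)^T w.
  by rewrite /dotp mxE; apply: eq_bigr => b _; rewrite !mxE.
have w1' : enorm w ^+ 2 <= 1 by rewrite -(expr1n _ 2) ler_pXn2r ?nnegrE ?enorm_ge0.
rewrite -expr2 -real_normK ?num_real //.
apply: (le_trans (y := (enorm (row a A)^T * enorm w) ^+ 2)).
  by rewrite ler_sqr ?nnegrE ?mulr_ge0 ?enorm_ge0 // cauchy_schwarz_abs.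
by rewrite exprMn enorm_sq ler_piMr ?dotp_ge0.
Qed.

Lemma mnorm_ub A w : enorm w <= 1 -> enorm (A *m w) <= mnorm A.
Proof.
move=> w1; apply: ub_le_sup; last by exists w.
have [K hK] := mulmx_enorm_bounded A; exists K => _ [v v1 <-]; exact: hK.
Qed.

Lemma mnorm_ge0 A : 0 <= mnorm A.
Proof. by rewrite -enorm0 -(mulmx0 _ A) mnorm_ub // enorm0 ler01. Qed.

Lemma enorm_mulmx_le A w : enorm (A *m w) <= mnorm A * enorm w.
Proof.
have [w0|nw] := eqVneq (enorm w) 0.
  by rewrite (enorm_eq0 _ w0) mulmx0 enorm0 mulr0.
have gw : 0 < enorm w by rewrite lt_def nw enorm_ge0.
have := mnorm_ub A ((enorm w)^-1 *: w).
rewrite -scalemxAr !enormZ ger0_norm ?invr_ge0 ?enorm_ge0 // mulVf //.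
by move=> /(_ (lexx _)); rewrite ler_pdivrMl // mulrC.
Qed.

Lemma enorm_trmx_mulmx_le A w : enorm (A^T *m w) <= mnorm A * enorm w.
Proof.
set v := A^T *m w; have [v0|nv] := eqVneq (enorm v) 0.
  by rewrite v0 mulr_ge0 ?mnorm_ge0 ?enorm_ge0.
have gv : 0 < enorm v by rewrite lt_def nv enorm_ge0.
suff : enorm v ^+ 2 <= enorm v * (mnorm A * enorm w) by rewrite expr2 ler_pM2l.
rewrite enorm_sq {1}/v dotp_trmx (le_trans (cauchy_schwarz _ _)) //.
have := enorm_mulmx_le A v; have := enorm_ge0 w; have := mnorm_ge0 A; nra.
Qed.

Lemma mnormB_le A B : mnorm (A - B) <= mnorm A + mnorm B.
Proof.
apply: ge_sup; first by exists (enorm ((A - B) *m 0)), 0 => //; rewrite /= enorm0 ler01.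
move=> _ [v v1 <-]; rewrite mulmxBl (le_trans (enormB_le _ _)) //.
by rewrite lerD // mnorm_ub.
Qed.

End Euclidean.

Section DirectionalDerivatives.
Context {R : realType} {d : nat}.
Local Notation V := 'cV[R]_d.

Lemma is_derive_ext {W : normedModType R} {F G : V -> W} {z w D} :
  F =1 G -> is_derive z w G D -> is_derive z w F D.
Proof. by move=> /funext ->. Qed.

Lemma is_derive_coord (m p : nat) (A : V -> 'M[R]_(m, p)) z w dA i j :
  is_derive z w A dA -> is_derive z w (fun y => A y i j) (dA i j).
Proof.
move=> [dA_ex <-]; apply: DeriveDef; first by move: dA_ex => /derivable_mxP; apply.
by rewrite derive_mx // mxE.
Qed.

Lemma is_derive_dotp (A B : V -> V) z w dA dB :
  is_derive z w A dA -> is_derive z w B dB ->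
  is_derive z w (fun y => dotp (A y) (B y)) (dotp (A z) dB + dotp dA (B z)).
Proof.
move=> hA hB.
apply: (is_derive_ext (G := (\sum_(a < d) ((fun y => A y a 0) * (fun y => B y a 0))))).
  by move=> y; rewrite /dotp fct_sumE.
apply: is_derive_eq.
  by apply: is_derive_sum => a; apply: is_deriveM; exact: is_derive_coord.
rewrite /dotp -big_split /=; apply: eq_bigr => a _.
by rewrite /GRing.scale /= mulrC [_ * B z a 0]mulrC.
Qed.

Lemma is_derive_diff {W : normedModType R} (F : V -> W) z w :
  differentiable F z -> is_derive z w F ('d F z w).
Proof. by move=> dF; apply: DeriveDef; [exact: diff_derivable | exact: deriveE]. Qed.

Lemma is_derive_argmin {F : V -> R} {z w D} :
  is_derive z w F D -> (forall y, F z <= F y) -> D = 0.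
Proof.
move=> [dF <-] zmin; apply/eqP; rewrite eq_le; apply/andP; split.
  rewrite /derive cvg_at_leftE //; apply: limr_le.
    rewrite -(cvg_at_leftE (fun h : R => h^-1 *: ((F \o shift z) _ - F z))) //.
    apply: cvg_trans dF; apply: cvg_app.
    move=> A [e e0 Ae]; exists e => // h he h0; apply: Ae => //; exact/ltr0_neq0.
  near=> h; apply: mulr_le0_ge0; last by rewrite subr_ge0 /= zmin.
  by rewrite invr_le0 ltW //; near: h; exists 1.
rewrite /derive cvg_at_rightE //; apply: limr_ge.
  rewrite -(cvg_at_rightE (fun h : R => h^-1 *: ((F \o shift z) _ - F z))) //.
  apply: cvg_trans dF; apply: cvg_app.
  move=> A [e e0 Ae]; exists e => // h he h0; apply: Ae => //; exact/lt0r_neq0.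
near=> h; apply: mulr_ge0; last by rewrite subr_ge0 /= zmin.
by rewrite invr_ge0 ltW //; near: h; exists 1.
Unshelve. all: by end_near. Qed.

End DirectionalDerivatives.

Section MultiplierExprEstimates.
Context {R : realType} {d : nat}.
Local Notation V := 'cV[R]_d.
Local Notation M := 'M[R]_d.

(* The shape of lambda_j^{k+1} given by the optimality condition; [b] is false for the
   last block, which is not coupled to a successor. *)
Definition multiplier_expr (e : R) (g u : V) (b : bool) (J : M) (c : V) : V :=
  - g - e^-1 *: u + (if b then J^T *m c else 0).

Lemma enorm_multiplier_expr_le (e r Mf Mp : R) (g u L dv : V) (b : bool) (J : M) :
  0 < e -> enorm g <= Mf -> (b -> 0 <= r) -> (b -> mnorm J <= Mp) ->
  enorm (multiplier_expr e g u b J (L - r *: dv))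
  <= Mf + enorm u / e + (if b then Mp * (enorm L + r * enorm dv) else 0).
Proof.
move=> e0 gMf r0 JMp; apply: (le_trans (enormD _ _)); apply: lerD.
  have ie : `|e^-1| = e^-1 by rewrite ger0_norm // invr_ge0 ltW.
  by apply: (le_trans (enormB_le _ _)); rewrite enormN enormZ ie mulrC lerD2r.
case: b r0 JMp => [/(_ isT) r0 /(_ isT) JMp|_ _] /=; last by rewrite enorm0.
apply: (le_trans (enorm_trmx_mulmx_le _ _)); apply: ler_pM; rewrite ?mnorm_ge0 ?enorm_ge0 //.
by rewrite (le_trans (enormB_le _ _)) // enormZ ger0_norm.
Qed.

Lemma multiplier_exprB (e : R) (ga gb u v L1 L0 dv ev : V) (b : bool) (Ja Jb : M) (r : R) :
  multiplier_expr e ga u b Ja (L1 - r *: dv) - multiplier_expr e gb v b Jb (L0 - r *: ev)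
  = (- (ga - gb) - e^-1 *: u + e^-1 *: v)
    + (if b then ((Ja - Jb)^T *m L1 + Jb^T *m (L1 - L0))
                 - (r *: (Ja^T *m dv) - r *: (Jb^T *m ev)) else 0).
Proof.
rewrite /multiplier_expr; case: b; last by apply/matrixP => i j; rewrite !mxE; ring.
have -> : (Ja - Jb)^T = Ja^T - Jb^T by apply/matrixP => i j; rewrite !mxE.
rewrite !mulmxBr mulmxBl -!scalemxAr.
move: (Ja^T *m L1) (Jb^T *m L1) (Jb^T *m L0) (Ja^T *m dv) (Jb^T *m ev) => A1 B1 B0 C1 C0.
by apply/matrixP => i j; rewrite !mxE; ring.
Qed.

Lemma enorm_multiplier_exprB_le (e r Lf Mp : R) (ga gb u v L1 L0 dv ev : V) (b : bool)
    (Ja Jb : M) :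
  0 < e -> enorm (ga - gb) <= Lf * enorm u ->
  (b -> 0 <= r) -> (b -> mnorm Ja <= Mp) -> (b -> mnorm Jb <= Mp) ->
  enorm (multiplier_expr e ga u b Ja (L1 - r *: dv) - multiplier_expr e gb v b Jb (L0 - r *: ev))
  <= (Lf + 1 / e) * enorm u + enorm v / e
     + (if b then mnorm (Ja - Jb) * enorm L1 + Mp * enorm (L1 - L0)
                  + Mp * r * (enorm dv + enorm ev)
        else 0).
Proof.
move=> e0 gLf r0 JaMp JbMp; rewrite multiplier_exprB; apply: (le_trans (enormD _ _)).
have ie : `|e^-1| = e^-1 by rewrite ger0_norm // invr_ge0 ltW.
apply: lerD.
  apply: (le_trans (enormD _ _)); rewrite enormZ ie.
  apply: (le_trans (lerD (enormB_le _ _) (lexx _))); rewrite enormN enormZ ie.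
  by move: gLf; rewrite mulrDl div1r [enorm v / e]mulrC; lra.
case: b r0 JaMp JbMp => [/(_ isT) r0 /(_ isT) JaMp /(_ isT) JbMp|_ _ _] /=; last by rewrite enorm0.
apply: (le_trans (enormB_le _ _)); apply: lerD.
  apply: (le_trans (enormD _ _)); apply: lerD; first exact: enorm_trmx_mulmx_le.
  by apply: (le_trans (enorm_trmx_mulmx_le _ _)); rewrite ler_wpM2r ?enorm_ge0.
apply: (le_trans (enormB_le _ _)); rewrite !enormZ ger0_norm //.
have := enorm_trmx_mulmx_le Ja dv; have := enorm_trmx_mulmx_le Jb ev.
have : mnorm Ja * enorm dv <= Mp * enorm dv by rewrite ler_wpM2r ?enorm_ge0.
have : mnorm Jb * enorm ev <= Mp * enorm ev by rewrite ler_wpM2r ?enorm_ge0.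
have := enorm_ge0 (Ja^T *m dv); have := enorm_ge0 (Jb^T *m ev).
nra.
Qed.

End MultiplierExprEstimates.

Section ConstantRecursions.
Context {R : realType}.

Lemma gsum_ge0 (M : R) a b : 0 <= M -> 0 <= gsum M a b.
Proof. by move=> M0; apply: sumr_ge0 => l _; apply: exprn_ge0. Qed.

Lemma mul_gsum (M : R) a b : M * gsum M a b = gsum M a.+1 b.+1.
Proof. by rewrite /gsum big_add1 /= mulr_sumr; apply: eq_bigr => l _; rewrite exprS. Qed.

Lemma gsum0S (M : R) b : gsum M 0 b.+1 = 1 + M * gsum M 0 b.
Proof. by rewrite mul_gsum /gsum big_ltn // expr0. Qed.

Lemma Ctji_step (Mp : R) rho eta m j : (j < m)%N ->
  Ctji Mp rho eta m j
  = Mp * Ctji Mp rho eta m j.+1 + (if m == j.+1 then Mp * rho m else 0).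
Proof.
move=> jm; rewrite /Ctji (gtn_eqF jm).
have [->|ne] := eqVneq m j.+1; first by rewrite subSnn expr1; ring.
by rewrite -(subnSK jm) exprS addr0; ring.
Qed.

Lemma Cji_step n (Mf Lf Mp Lp : R) rho eta m j : (j < m)%N -> (j.+1 < n)%N ->
  Cji n Mf Lf Mp Lp rho eta m j
  = 2 * Mp * Ctji Mp rho eta m j.+1 + Mp * Cji n Mf Lf Mp Lp rho eta m j.+1
    + (if m == j.+1 then Mp * rho m else 0).
Proof.
move=> jm jn; rewrite /Cji /Ctji (gtn_eqF jm).
have e1 : (n - j - 1 = (n - j.+1 - 1).+1)%N by lia.
have [->|ne] := eqVneq m j.+1.
  rewrite subSnn e1 -mul_gsum expr1 (_ : (2 * 1 + 1)%:R = 3 :> R) //.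
  by rewrite (_ : (2 * 1 - 1)%:R = 1 :> R) //; ring.
have j1m : (j.+1 < m)%N by rewrite ltn_neqAle eq_sym ne.
have [q ->] : exists q, m = (j + q.+2)%N by exists (m - j.+2)%N; lia.
have -> : (j + q.+2 - j = q.+2)%N by lia.
have -> : (j + q.+2 - j.+1 = q.+1)%N by lia.
have odd_shift a : (2 * a.+1 + 1)%:R = (2 * a + 1)%:R + 2 :> R by rewrite -natrD; congr _%:R; lia.
have even_shift a : (2 * a.+2 - 1)%:R = (2 * a.+1 - 1)%:R + 2 :> R by rewrite -natrD; congr _%:R; lia.
by rewrite e1 -mul_gsum odd_shift even_shift !exprS addr0; ring.
Qed.

End ConstantRecursions.

Lemma downward_ind (n : nat) (P : nat -> Prop) :
  (forall j, (j < n)%N -> ((j.+1 < n)%N -> P j.+1) -> P j) ->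
  forall j, (j < n)%N -> P j.
Proof.
move=> IH j jn; have [t] : exists t, (n - j = t.+1)%N by exists (n - j).-1; lia.
elim: t j jn => [|t IHt] j jn e; apply: IH => // j1n; first lia.
by apply: IHt; lia.
Qed.

Section Unrolling.
Context {R : realType} {n : nat} {Mf Lf Mp Lp : R} {rho eta : nat -> R}
  {lam_norm lam_step x_step x_prev_step jac_step : nat -> R}.
Hypotheses (Mf_ge0 : 0 <= Mf) (Lp_ge0 : 0 <= Lp) (Mp_ge0 : 0 <= Mp)
  (rho_gt0 : forall j, (j < n)%N -> 0 < rho j)
  (eta_gt0 : forall i, (i <= n)%N -> 0 < eta i)
  (x_step_ge0 : forall i, 0 <= x_step i)
  (jac_step_ge0 : forall j, 0 <= jac_step j)
  (jac_step_lip : forall j, (j.+1 < n)%N -> jac_step j <= Lp * x_step j.+1)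
  (jac_step_bound : forall j, (j.+1 < n)%N -> jac_step j <= 2 * Mp).
Hypothesis lam_norm_rec : forall j, (j < n)%N ->
  lam_norm j <= Mf + x_step j.+1 / eta j.+1
    + (if (j.+1 < n)%N then Mp * (lam_norm j.+1 + rho j.+1 * x_step j.+2) else 0).
Hypothesis lam_step_rec : forall j, (j < n)%N ->
  lam_step j <= (Lf + 1 / eta j.+1) * x_step j.+1 + x_prev_step j.+1 / eta j.+1
    + (if (j.+1 < n)%N then jac_step j * lam_norm j.+1 + Mp * lam_step j.+1
                            + Mp * rho j.+1 * (x_step j.+2 + x_prev_step j.+2)
       else 0).

Local Notation sumCt j := (\sum_(j <= m < n) Ctji Mp rho eta m j * x_step m.+1).
Local Notation sumC j := (\sum_(j <= m < n) (Cji n Mf Lf Mp Lp rho eta m j * x_step m.+1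
                                            + Ctji Mp rho eta m j * x_prev_step m.+1)).

Lemma Ctji_ge0 m j : (m < n)%N -> 0 <= Ctji Mp rho eta m j.
Proof.
move=> mn; have eta0 := eta_gt0 _ mn; have rho0 := rho_gt0 _ mn.
rewrite /Ctji; case: eqP => [<-|_]; first by rewrite div1r invr_ge0 ltW.
have Mp0 := exprn_ge0 (m - j) Mp_ge0.
by rewrite addr_ge0 // mulr_ge0 // ?invr_ge0 ltW.
Qed.

Lemma sumCt_ge0 j : 0 <= sumCt j.
Proof.
rewrite big_nat_cond; apply: sumr_ge0 => m /andP[/andP[_ mn] _].
by rewrite mulr_ge0 ?Ctji_ge0.
Qed.

Lemma sumCt_step j : (j.+1 < n)%N ->
  sumCt j = x_step j.+1 / eta j.+1 + Mp * sumCt j.+1 + Mp * rho j.+1 * x_step j.+2.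
Proof.
move=> j1n; rewrite big_ltn ?(ltn_trans (ltnSn j) j1n) // {1}/Ctji eqxx.
rewrite (eq_big_nat _ _ (F2 := fun m => Mp * (Ctji Mp rho eta m j.+1 * x_step m.+1)
     + (if m == j.+1 then Mp * rho m * x_step m.+1 else 0))); last first.
  move=> m /andP[jm _]; rewrite Ctji_step //.
  by case: eqP => _; rewrite ?mulr0 ?addr0 ?mul0r; ring.
rewrite big_split /= -big_mkcond big_nat1_eq leqnn j1n /= -mulr_sumr; ring.
Qed.

Lemma sumC_step j : (j.+1 < n)%N ->
  sumC j = (gsum Mp 0 (n - j - 1) * Mf * Lp + Lf + 1 / eta j.+1) * x_step j.+1
           + x_prev_step j.+1 / eta j.+1 + 2 * Mp * sumCt j.+1 + Mp * sumC j.+1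
           + Mp * rho j.+1 * (x_step j.+2 + x_prev_step j.+2).
Proof.
move=> j1n; rewrite big_ltn ?(ltn_trans (ltnSn j) j1n) // {1}/Cji {1}/Ctji !eqxx.
rewrite (eq_big_nat _ _ (F2 := fun m => 2 * Mp * (Ctji Mp rho eta m j.+1 * x_step m.+1)
     + Mp * (Cji n Mf Lf Mp Lp rho eta m j.+1 * x_step m.+1
             + Ctji Mp rho eta m j.+1 * x_prev_step m.+1)
     + (if m == j.+1 then Mp * rho m * (x_step m.+1 + x_prev_step m.+1) else 0))); last first.
  move=> m /andP[jm _]; rewrite (Ctji_step Mp rho eta m j jm) Cji_step //.
  by case: eqP => _; rewrite ?addr0; ring.
rewrite !big_split /= -big_mkcond big_nat1_eq leqnn j1n /= -!mulr_sumr !big_split /=.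
ring.
Qed.

Lemma lam_norm_unroll j : (j < n)%N -> lam_norm j <= Mf * gsum Mp 0 (n - j) + sumCt j.
Proof.
move: j; apply: downward_ind => j jn IH; have := lam_norm_rec _ jn.
case: (ltnP j.+1 n) => j1n /= rec.
  have := ler_wpM2l Mp_ge0 (IH j1n).
  rewrite (sumCt_step _ j1n) (_ : (n - j = (n - j.+1).+1)%N) ?gsum0S; last by lia.
  lra.
have -> : n = j.+1 by apply/eqP; rewrite eqn_leq j1n jn.
rewrite big_nat1 subSnn /gsum big_nat1 expr0 /Ctji eqxx; lra.
Qed.

Lemma lam_step_unroll j : (j < n)%N -> lam_step j <= sumC j.
Proof.
move: j; apply: downward_ind => j jn IH; have := lam_step_rec _ jn.
case: (ltnP j.+1 n) => j1n /= rec; last first.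
  have -> : n = j.+1 by apply/eqP; rewrite eqn_leq j1n jn.
  rewrite big_nat1 /Cji /Ctji eqxx subSnn subnn /gsum big_geq //; lra.
rewrite (sumC_step _ j1n) (_ : (n - j - 1 = n - j.+1)%N); last by lia.
have lam1 := lam_norm_unroll _ j1n; set G := gsum Mp 0 (n - j.+1) in lam1 *.
have G0 : 0 <= G by apply: gsum_ge0.
have jac0 := jac_step_ge0 j.
have p1 : jac_step j * lam_norm j.+1 <= jac_step j * (Mf * G + sumCt j.+1).
  by rewrite ler_wpM2l.
have p2 : jac_step j * (Mf * G) <= Lp * x_step j.+1 * (Mf * G).
  by rewrite ler_wpM2r ?mulr_ge0 ?jac_step_lip.
have p3 : jac_step j * sumCt j.+1 <= 2 * Mp * sumCt j.+1.
  by rewrite ler_wpM2r ?sumCt_ge0 ?jac_step_bound.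
have p4 := ler_wpM2l Mp_ge0 (IH j1n).
lra.
Qed.

End Unrolling.

Section SquaredSums.
Context {R : realType}.

Lemma sqr_sum_le (i n : nat) (p : nat -> R) :
  (\sum_(i <= m < n) p m) ^+ 2 <= (n - i)%:R * \sum_(i <= m < n) p m ^+ 2.
Proof.
set Q := \sum_(i <= m < n) p m ^+ 2.
rewrite expr2 mulr_suml.
have -> : (n - i)%:R * Q
    = \sum_(i <= m < n) \sum_(i <= l < n) ((p m ^+ 2 + p l ^+ 2) / 2).
  have row m : \sum_(i <= l < n) ((p m ^+ 2 + p l ^+ 2) / 2)
               = ((n - i)%:R * p m ^+ 2 + Q) / 2.
    by rewrite -mulr_suml big_split /= sumr_const_nat mulr_natl.
  rewrite (eq_bigr _ (fun m _ => row m)) -mulr_suml big_split /= sumr_const_nat.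
  by rewrite -mulr_sumr -/Q mulr_natl; field.
apply: ler_sum => m _; rewrite mulr_sumr; apply: ler_sum => l _.
by have := sqr_ge0 (p m - p l); lra.
Qed.

Lemma sqr_le_split_sums (i n : nat) (c ct u v : nat -> R) (a : R) : 0 <= a ->
  a <= \sum_(i <= m < n) (c m * u m + ct m * v m) ->
  a ^+ 2 <= \sum_(i <= m < n) (2 * (n - i))%:R * c m ^+ 2 * u m ^+ 2
            + \sum_(i <= m < n) (2 * (n - i))%:R * ct m ^+ 2 * v m ^+ 2.
Proof.
move=> a0; rewrite big_split /=.
set P := \sum_(i <= m < n) c m * u m; set Q := \sum_(i <= m < n) ct m * v m => aPQ.
have scaled (w z : nat -> R) : \sum_(i <= m < n) (2 * (n - i))%:R * w m ^+ 2 * z m ^+ 2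
    = 2 * ((n - i)%:R * \sum_(i <= m < n) (w m * z m) ^+ 2).
  by rewrite !mulr_sumr; apply: eq_bigr => m _; rewrite natrM exprMn; ring.
rewrite !scaled; have := sqr_sum_le i n (fun m => c m * u m).
have := sqr_sum_le i n (fun m => ct m * v m); rewrite -/P -/Q.
have : a ^+ 2 <= (P + Q) ^+ 2 by rewrite ler_sqr ?nnegrE ?(le_trans a0 aPQ).
have := sqr_ge0 (P - Q); lra.
Qed.

End SquaredSums.

Section ProxADMM.
Context {R : realType} {d n : nat} {f : nat -> 'cV[R]_d -> R}
  {gradf : nat -> 'cV[R]_d -> 'cV[R]_d}
  {phi : 'cV[R]_d -> 'cV[R]_d} {Jphi : 'cV[R]_d -> 'M[R]_d}
  {rho eta : nat -> R} {x lam : nat -> nat -> 'cV[R]_d}.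
Hypotheses (f_diff : forall i, (i <= n)%N -> forall z, differentiable (f i) z)
  (f_grad : forall i, (i <= n)%N -> forall z v, 'd (f i) z v = dotp (gradf i z) v)
  (phi_diff : forall z, differentiable phi z)
  (phi_jac : forall z v, 'd phi z v = Jphi z *m v)
  (eta_gt0 : forall i, (i <= n)%N -> 0 < eta i)
  (admm : prox_admm n f phi rho eta x lam).
Local Notation V := 'cV[R]_d.

Lemma gs_pointE k m (y : V) i :
  gs_point x k m y i = if i == m then y else gs_point x k m 0 i.
Proof. by rewrite /gs_point; case: ltnP => h; [rewrite ltn_eqF | case: eqP]. Qed.

Lemma is_derive_gs_point k m (z w : V) i :
  is_derive z w (fun y => gs_point x k m y i) (if i == m then w else 0).
Proof.
have [->|ne] := eqVneq i m.
  by apply: (is_derive_ext _ (is_derive_id z w)) => y; rewrite gs_pointE eqxx.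
apply: (is_derive_ext _ (is_derive_cst (gs_point x k m 0 i) z w)) => y.
by rewrite gs_pointE (negbTE ne).
Qed.

Lemma is_derive_comp_gs_point {W : normedModType R} (F : V -> W) k m (z w : V) i :
  (forall y, differentiable F y) ->
  is_derive z w (fun y => F (gs_point x k m y i)) (if i == m then 'd F z w else 0).
Proof.
move=> dF; have [->|ne] := eqVneq i m.
  by apply: (is_derive_ext _ (is_derive_diff F z w (dF z))) => y; rewrite gs_pointE eqxx.
apply: (is_derive_ext _ (is_derive_cst (F (gs_point x k m 0 i)) z w)) => y.
by rewrite gs_pointE (negbTE ne).
Qed.

Let residual k m i (y : V) := gs_point x k m y i.+1 - phi (gs_point x k m y i).

Lemma is_derive_residual k m (z w : V) i :
  is_derive z w (residual k m i)
    ((if i.+1 == m then w else 0) - (if i == m then Jphi z *m w else 0)).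
Proof.
apply: (is_derive_ext (G := ((fun y => gs_point x k m y i.+1)
                            - (fun y => phi (gs_point x k m y i))))) => //.
apply: is_derive_eq.
  exact: is_deriveB (is_derive_gs_point _ _ _ _ _) (is_derive_comp_gs_point _ _ _ _ _ _ phi_diff).
by rewrite phi_jac.
Qed.

Lemma is_derive_coupling k m (z w : V) i :
  is_derive z w
    (fun y => dotp (lam k i) (residual k m i y) + rho i / 2 * enorm (residual k m i y) ^+ 2)
    (dotp (lam k i + rho i *: residual k m i z)
       ((if i.+1 == m then w else 0) - (if i == m then Jphi z *m w else 0))).
Proof.
apply: (is_derive_ext (G := ((fun y => dotp (cst (lam k i) y) (residual k m i y))
                            + (rho i / 2) \*: (fun y => dotp (residual k m i y) (residual k m i y))))).
  by move=> y; rewrite /= enorm_sq.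
apply: is_derive_eq.
  apply: is_deriveD; first exact: is_derive_dotp (is_derive_cst _ _ _) (is_derive_residual _ _ _ _ _).
  by apply: is_deriveZ; exact: is_derive_dotp (is_derive_residual _ _ _ _ _) (is_derive_residual _ _ _ _ _).
rewrite dotp0l addr0 (dotpC _ (residual k m i z)) dotpDl dotpZl /GRing.scale /=.
by congr (_ + _); field.
Qed.

Lemma is_derive_subproblem k m (z w : V) :
  is_derive z w (fun y => auglag n f phi rho (gs_point x k m y) (lam k)
                   + 1 / (2 * eta m) * enorm (y - x k m) ^+ 2)
   (\sum_(i < n.+1) (if (i : nat) == m then 'd (f i) z w else 0)
    + \sum_(i < n) dotp (lam k i + rho i *: residual k m i z)
         ((if i.+1 == m then w else 0) - (if (i : nat) == m then Jphi z *m w else 0))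
    + 1 / (2 * eta m) *: (dotp (z - x k m) w + dotp w (z - x k m))).
Proof.
apply: (is_derive_ext (G :=
  ((\sum_(i < n.+1) (fun y => f i (gs_point x k m y i))
   + \sum_(i < n) (fun y => dotp (lam k i) (residual k m i y)
                            + rho i / 2 * enorm (residual k m i y) ^+ 2))
   + (1 / (2 * eta m)) \*: (fun y => dotp (y - x k m) (y - x k m))))).
  by move=> y; rewrite /auglag /= !fct_sumE enorm_sq.
have dshift : is_derive z w (fun y => y - x k m) w.
  apply: (is_derive_ext (G := (id - cst (x k m)))) => //.
  by rewrite -[w in is_derive _ _ _ w]subr0; exact: is_deriveB.
apply: is_deriveD; last by apply: is_deriveZ; exact: is_derive_dotp.
apply: is_deriveD; last by apply: is_derive_sum => i; exact: is_derive_coupling.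
by apply: is_derive_sum => i; apply: is_derive_comp_gs_point => y; apply: f_diff; rewrite -ltnS.
Qed.

(* The derivative of the [j.+1]-th subproblem at its minimiser is [w |-> dotp G w];
   testing it in the direction [w := G] forces [G = 0]. *)
Lemma subproblem_stationary k j : (j < n)%N ->
  let z := x k.+1 j.+1 in
  let c i := lam k i + rho i *: residual k j.+1 i z in
  gradf j.+1 z + c j - (if (j.+1 < n)%N then (Jphi z)^T *m c j.+1 else 0)
    + (eta j.+1)^-1 *: (z - x k j.+1) = 0.
Proof.
move=> jn z c; set b := (j.+1 < n)%N; set G := _ + _ + _.
have eta0 : eta j.+1 != 0 by rewrite gt_eqF // eta_gt0.
have derivE (g cj cn u w : V) :
    dotp g w + (dotp cj w - (if b then dotp cn (Jphi z *m w) else 0))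
      + 1 / (2 * eta j.+1) *: (dotp u w + dotp w u)
    = dotp (g + cj - (if b then (Jphi z)^T *m cn else 0) + (eta j.+1)^-1 *: u) w.
  rewrite !dotpDl dotpNl dotpZl (dotpC w u) /GRing.scale /=.
  by case: (b); rewrite ?dotp0l ?dotp_trmx; field.
have := is_derive_argmin (is_derive_subproblem k j.+1 z G) ((admm k).1 j.+1 jn).
rewrite -(big_mkcond (fun i : 'I_n.+1 => (i : nat) == j.+1)).
rewrite (big_ord1_eq _ (fun i => 'd (f i) z G)) ltnS jn f_grad //.
under eq_bigr => i _ do rewrite eqSS dotpBr (fun_if (dotp _)) (fun_if (dotp (c i))) !dotp0r.
rewrite sumrB -!(big_mkcond (fun i : 'I_n => (i : nat) == _)).
rewrite (big_ord1_eq _ (fun i => dotp (c i) G)) (big_ord1_eq _ (fun i => dotp (c i) _)) jn.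
by rewrite derivE => /dotp_eq0.
Qed.

Lemma multiplier_identity k j : (j < n)%N ->
  lam k.+1 j = multiplier_expr (eta j.+1) (gradf j.+1 (x k.+1 j.+1))
    (x k.+1 j.+1 - x k j.+1) (j.+1 < n)%N (Jphi (x k.+1 j.+1))
    (lam k.+1 j.+1 - rho j.+1 *: (x k.+1 j.+2 - x k j.+2)).
Proof.
move=> jn; have := subproblem_stationary k j jn; rewrite /residual.
have -> : gs_point x k j.+1 (x k.+1 j.+1) j.+1 = x k.+1 j.+1 by rewrite /gs_point ltnn eqxx.
have -> : gs_point x k j.+1 (x k.+1 j.+1) j = x k.+1 j by rewrite /gs_point ltnSn.
have solve (g c T u : V) : g + c - T + u = 0 -> c = - g - u + T.
  by move=> /matrixP h; apply/matrixP => a b; move: (h a b); rewrite !mxE; lra.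
rewrite -(admm k).2 // => /solve ->; rewrite /multiplier_expr; case: ifP => // j1n.
have -> : gs_point x k j.+1 (x k.+1 j.+1) j.+2 = x k j.+2.
  by rewrite /gs_point ltnNge leqnSn /= gtn_eqF.
rewrite ((admm k).2 j.+1 j1n); congr (_ + _ *m _).
by apply/matrixP => a b; rewrite !mxE; ring.
Qed.

Section IterateEstimates.
Context {Mf Lf Mphi Lphi : R} {k : nat}.
Hypotheses (rho_gt0 : forall i, (i < n)%N -> 0 < rho i)
  (Mf_ge0 : 0 <= Mf) (Mphi_ge0 : 0 <= Mphi) (Lphi_ge0 : 0 <= Lphi)
  (grad_bound : forall m, (m <= n)%N -> enorm (gradf m (x k.+2 m)) <= Mf)
  (grad_lip : forall m, (m <= n)%N ->
     enorm (gradf m (x k.+2 m) - gradf m (x k.+1 m)) <= Lf * enorm (x k.+2 m - x k.+1 m))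
  (jac_bound : forall m, (m <= n)%N -> mnorm (Jphi (x k.+2 m)) <= Mphi)
  (jac_bound_prev : forall m, (m <= n)%N -> mnorm (Jphi (x k.+1 m)) <= Mphi)
  (jac_lip : forall m, (m <= n)%N ->
     mnorm (Jphi (x k.+2 m) - Jphi (x k.+1 m)) <= Lphi * enorm (x k.+2 m - x k.+1 m)).
Local Notation step j := (enorm (x k.+2 j - x k.+1 j)).
Local Notation prev_step j := (enorm (x k.+1 j - x k j)).

Lemma multiplier_norm_rec j : (j < n)%N ->
  enorm (lam k.+2 j) <= Mf + step j.+1 / eta j.+1
    + (if (j.+1 < n)%N then Mphi * (enorm (lam k.+2 j.+1) + rho j.+1 * step j.+2) else 0).
Proof.
move=> jn; rewrite (multiplier_identity k.+1 j jn).
by apply: enorm_multiplier_expr_le => [|||_]; [exact: eta_gt0 | exact: grad_bound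
  | move=> /rho_gt0/ltW | exact: jac_bound].
Qed.

Lemma multiplier_step_rec j : (j < n)%N ->
  enorm (lam k.+2 j - lam k.+1 j)
  <= (Lf + 1 / eta j.+1) * step j.+1 + prev_step j.+1 / eta j.+1
     + (if (j.+1 < n)%N
        then mnorm (Jphi (x k.+2 j.+1) - Jphi (x k.+1 j.+1)) * enorm (lam k.+2 j.+1)
             + Mphi * enorm (lam k.+2 j.+1 - lam k.+1 j.+1)
             + Mphi * rho j.+1 * (step j.+2 + prev_step j.+2)
        else 0).
Proof.
move=> jn; rewrite (multiplier_identity k.+1 j jn) (multiplier_identity k j jn).
by apply: enorm_multiplier_exprB_le => [|||_|_]; [exact: eta_gt0 | exact: grad_lip
  | move=> /rho_gt0/ltW | exact: jac_bound | exact: jac_bound_prev].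
Qed.

Lemma multiplier_step_sqr_le i : (i < n)%N ->
  enorm (lam k.+2 i - lam k.+1 i) ^+ 2 <=
      \sum_(i <= j < n)
         (2 * (n - i))%:R * Cji n Mf Lf Mphi Lphi rho eta j i ^+ 2 * step j.+1 ^+ 2
    + \sum_(i <= j < n)
         (2 * (n - i))%:R * Ctji Mphi rho eta j i ^+ 2 * prev_step j.+1 ^+ 2.
Proof.
move=> i_n; apply: sqr_le_split_sums; first exact: enorm_ge0.
have jac_step_lip j : (j.+1 < n)%N ->
    mnorm (Jphi (x k.+2 j.+1) - Jphi (x k.+1 j.+1)) <= Lphi * step j.+1.
  by move=> /ltnW; exact: jac_lip.
have jac_step_bound j : (j.+1 < n)%N ->
    mnorm (Jphi (x k.+2 j.+1) - Jphi (x k.+1 j.+1)) <= 2 * Mphi.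
  move=> /ltnW j1n; apply: (le_trans (mnormB_le _ _)).
  by have := jac_bound _ j1n; have := jac_bound_prev _ j1n; lra.
exact: (@lam_step_unroll R n Mf Lf Mphi Lphi rho eta (fun j => enorm (lam k.+2 j))
  (fun j => enorm (lam k.+2 j - lam k.+1 j)) (fun j => step j) (fun j => prev_step j)
  (fun j => mnorm (Jphi (x k.+2 j.+1) - Jphi (x k.+1 j.+1)))
  Mf_ge0 Lphi_ge0 Mphi_ge0 rho_gt0 eta_gt0 (fun _ => enorm_ge0 _) (fun _ => mnorm_ge0 _)
  jac_step_lip jac_step_bound multiplier_norm_rec multiplier_step_rec i i_n).
Qed.

End IterateEstimates.

End ProxADMM.

Lemma col_pack {R : realType} {d : nat} (n : nat) (y : nat -> 'cV[R]_d) m :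
  (m <= n)%N -> col (inord m) (pack n y) = y m.
Proof. by move=> mn; apply/matrixP => a b; rewrite !mxE (ord1 b) inordK. Qed.

Theorem lemma2 (R : realType) (n d : nat) (hn : (1 <= n)%N) (hd : (1 <= d)%N)
  (f : nat -> 'cV[R]_d -> R) (gradf : nat -> 'cV[R]_d -> 'cV[R]_d)
  (phi : 'cV[R]_d -> 'cV[R]_d) (Jphi : 'cV[R]_d -> 'M[R]_d)
  (rho eta : nat -> R) (x lam : nat -> nat -> 'cV[R]_d)
  (S : set 'M[R]_(d, n.+1)) (Mf Lf Cphi Mphi Lphi : R) (k : nat) :
  (* f_0, ..., f_n are continuously differentiable with gradients gradf i *)
  (forall i, (i <= n)%N -> forall z, differentiable (f i) z) ->
  (forall i, (i <= n)%N -> forall z v, 'd (f i) z v = dotp (gradf i z) v) ->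
  (forall i, (i <= n)%N -> continuous (gradf i)) ->
  (* phi is continuously differentiable with Jacobian matrix Jphi *)
  (forall z, differentiable phi z) ->
  (forall z v, 'd phi z v = Jphi z *m v) ->
  continuous Jphi ->
  (forall i, (i < n)%N -> 0 < rho i) ->
  (forall i, (i <= n)%N -> 0 < eta i) ->
  prox_admm n f phi rho eta x lam ->
  compact S ->
  A2 S gradf phi Jphi Mf Lf Cphi Mphi Lphi ->
  (1 <= k)%N ->
  S (pack n (x k)) -> S (pack n (x k.+1)) ->
  forall i, (i < n)%N ->
    enorm (lam k.+1 i - lam k i) ^+ 2 <=
      \sum_(i <= j < n)
         (2 * (n - i))%:R * Cji n Mf Lf Mphi Lphi rho eta j i ^+ 2
           * enorm (x k.+1 j.+1 - x k j.+1) ^+ 2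
    + \sum_(i <= j < n)
         (2 * (n - i))%:R * Ctji Mphi rho eta j i ^+ 2
           * enorm (x k j.+1 - x k.-1 j.+1) ^+ 2.
Proof.
move=> f_diff f_grad _ phi_diff phi_jac _ rho_gt0 eta_gt0 admm _ [[Mf0 _ _ Mphi0 Lphi0] A2S].
case: k => [//|k] _ Sk Sk1.
have A2_at m : (m <= n)%N ->
  [/\ enorm (gradf m (x k.+2 m)) <= Mf,
      enorm (gradf m (x k.+2 m) - gradf m (x k.+1 m)) <= Lf * enorm (x k.+2 m - x k.+1 m),
      mnorm (Jphi (x k.+2 m)) <= Mphi, mnorm (Jphi (x k.+1 m)) <= Mphi &
      mnorm (Jphi (x k.+2 m) - Jphi (x k.+1 m)) <= Lphi * enorm (x k.+2 m - x k.+1 m)].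
  move=> mn; have [g1 g2 _ J1 J2] := A2S _ _ Sk1 Sk (inord m).
  have [_ _ _ J0 _] := A2S _ _ Sk Sk1 (inord m).
  by rewrite !col_pack // inordK ?ltnS // in g1 g2 J1 J2 J0.
by apply: (multiplier_step_sqr_le f_diff f_grad phi_diff phi_jac eta_gt0 admm rho_gt0
  (ltW Mf0) (ltW Mphi0) (ltW Lphi0)) => m /A2_at[].
Qed.
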